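(* Let $e$ be an expression, $n$ a principal, $\theta$ an annotated type and $\Pi\subseteq\mathsf{Privileges}$ such that the static-analysis judgement $\varnothing;\,n\vdash e:\theta,\ \Pi$ is derivable. Then for every $P\subseteq\mathsf{Privileges}$ with $\Pi\subseteq P$ we have $[\![\varnothing\vdash e:\theta^*]\!]\,n\,P\,\{\}\neq\star$.
   Context: Fix sets $\mathsf{Principals}$ and $\mathsf{Privileges}$ and an access control list $\mathcal{A}:\mathsf{Principals}\to\mathcal{P}(\mathsf{Privileges})$. Language. Types: $t::=\mathtt{bool}\mid t_1\to t_2$. Expressions ($x,f$ variables, $n$ a principal, $p$ a privilege): $e::=\mathtt{true}\mid x\mid \mathtt{if}\ e\ \mathtt{then}\ e_1\ \mathtt{else}\ e_2\mid \lambda x.e\mid e_1\,e_2\mid \mathtt{letrec}\ f(x)=e_1\ \mathtt{in}\ e_2\mid \mathtt{signs}\ n\ e\mid \mathtt{dopriv}\ p\ \mathtt{in}\ e\mid \mathtt{check}\ p\ \mathtt{for}\ e\mid \mathtt{test}\ p\ \mathtt{then}\ e_1\ \mathtt{else}\ e_2$. Typing judgements $D\vdash e:t$ ($D$ a finite map from variables to types) follow the simply typed rules: $\mathtt{true}:\mathtt{bool}$; $x:D(x)$; the conditional needs a $\mathtt{bool}$ guard and branches of a common type; $\lambda$ and application as usual; $\mathtt{letrec}\ f(x)=e_1\ \mathtt{in}\ e_2$ has type $t$ if $D,f:t_1\to t_2,x:t_1\vdash e_1:t_2$ and $D,f:t_1\to t_2\vdash e_2:t$; $\mathtt{signs}$,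 $\mathtt{dopriv}$, $\mathtt{check}$ have the type of their body; $\mathtt{test}\ p\ \mathtt{then}\ e_1\ \mathtt{else}\ e_2$ has type $t$ if both $e_1,e_2$ do. Eager denotational semantics. A cpo is a poset with lubs of ascending chains (no least element required). $\bot,\star$ are two distinct values that are neither booleans nor functions. For a cpo $C$, $C_{\bot\star}=C\cup\{\bot,\star\}$ with $u\le v$ iff $u=\bot$, or $u=v$, or $u,v\in C$ and $u\le v$ in $C$. $[\![\mathtt{bool}]\!]=\{\mathsf{true},\mathsf{false}\}$ and $\mathcal{P}(\mathsf{Privileges})$ are ordered by equality; $[\![t_1\to t_2]\!]=\mathcal{P}(\mathsf{Privileges})\to[\![t_1]\!]\to[\![t_2]\!]_{\bot\star}$ (continuous functions, pointwise order). $[\![D]\!]$ is the set of records $h$ with $h.x\in[\![D(x)]\!]$; $h[x\mapsto d]$ is extension/update; $\{\}$ is the empty record. A judgement denotes $[\![D\vdash e:t]\!]\in\mathsf{Principals}\to\mathcal{P}(\mathsf{Privileges})\to[\![D]\!]\to[\![t]\!]_{\bot\star}$, written $[\![e]\!]nPh$ below. The metalanguage ''let $d=E_1$ in $E_2$'' yields $E_1$ if $E_1\in\{\bot,\star\}$ and otherwise $E_2$ with $d$ bound to $E_1$; write $P\sqcup_n\{p\}=P\cup\{p\}$ if $p\in\mathcal{A}(n)$ and $=P$ otherwise; $\mathit{fix}$ is least fixed point. Equations: $[\![\mathtt{true}]\!]nPh=\mathsf{true}$; $[\![x]\!]nPh=h.x$; $[\![\mathtt{if}\ e\ \mathtt{then}\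 e_1\ \mathtt{else}\ e_2]\!]nPh=$ let $b=[\![e]\!]nPh$ in (if $b$ then $[\![e_1]\!]nPh$ else $[\![e_2]\!]nPh$); $[\![\lambda x.e]\!]nPh=\lambda P'.\lambda d.[\![e]\!]nP'(h[x\mapsto d])$; $[\![e_1e_2]\!]nPh=$ let $f=[\![e_1]\!]nPh$ in let $d=[\![e_2]\!]nPh$ in $fPd$; $[\![\mathtt{letrec}\ f(x)=e_1\ \mathtt{in}\ e_2]\!]nPh=[\![e_2]\!]nP(h[f\mapsto \mathit{fix}\,G])$ where $G(g)=\lambda P'.\lambda d.[\![e_1]\!]nP'(h[f\mapsto g,x\mapsto d])$; $[\![\mathtt{signs}\ n'\ e]\!]nPh=[\![e]\!]n'(P\cap\mathcal{A}(n'))h$; $[\![\mathtt{dopriv}\ p\ \mathtt{in}\ e]\!]nPh=[\![e]\!]n(P\sqcup_n\{p\})h$; $[\![\mathtt{check}\ p\ \mathtt{for}\ e]\!]nPh=$ if $p\in P$ then $[\![e]\!]nPh$ else $\star$; $[\![\mathtt{test}\ p\ \mathtt{then}\ e_1\ \mathtt{else}\ e_2]\!]nPh=$ if $p\in P$ then $[\![e_1]\!]nPh$ else $[\![e_2]\!]nPh$. Static analysis. Annotated types $\theta::=\mathtt{bool}\mid \theta_1\xrightarrow{\Pi}\theta_2$ with $\Pi\subseteq\mathsf{Privileges}$. Erasure: $\mathtt{bool}^*=\mathtt{bool}$, $(\theta_1\xrightarrow{\Pi}\theta_2)^*=\theta_1^*\to\theta_2^*$; for an annotated context $\Delta$, $\Delta^*$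 erases pointwise. Subtyping $\le$ is the least relation with $\mathtt{bool}\le\mathtt{bool}$ and $\theta_1\xrightarrow{\Pi_1}\theta_1'\le\theta_2\xrightarrow{\Pi_2}\theta_2'$ when $\theta_2\le\theta_1$, $\theta_1'\le\theta_2'$, $\Pi_1\subseteq\Pi_2$. Judgements $\Delta;\,n\vdash e:\theta,\ \Pi$ are derived by: $\Delta;n\vdash\mathtt{true}:\mathtt{bool},\varnothing$; $\Delta,x:\theta;n\vdash x:\theta,\varnothing$; from $\Delta,x:\theta_1;n\vdash e:\theta_2,\Pi$ infer $\Delta;n\vdash\lambda x.e:\theta_1\xrightarrow{\Pi}\theta_2,\varnothing$; from $\Delta;n\vdash e_1:\theta_1\xrightarrow{\Pi}\theta_2,\Pi_1$, $\Delta;n\vdash e_2:\theta_1',\Pi_2$, $\theta_1'\le\theta_1$ infer $\Delta;n\vdash e_1e_2:\theta_2,\Pi\cup\Pi_1\cup\Pi_2$; from $\Delta;n\vdash e:\mathtt{bool},\Pi_1$, $\Delta;n\vdash e_1:\theta,\Pi_2$, $\Delta;n\vdash e_2:\theta,\Pi_3$ infer $\Delta;n\vdash \mathtt{if}\ e\ \mathtt{then}\ e_1\ \mathtt{else}\ e_2:\theta,\Pi_1\cup\Pi_2\cup\Pi_3$; from $\Delta,f:\theta_1\xrightarrow{\Pi}\theta_2,x:\theta_1;n\vdash e_1:\theta_2,\Pi$ and $\Delta,f:\theta_1\xrightarrow{\Pi}\theta_2;n\vdash e_2:\theta,\Pi_1$ infer $\Delta;n\vdash\mathtt{letrec}\ f(x)=e_1\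 \mathtt{in}\ e_2:\theta,\Pi\cup\Pi_1$; from $\Delta;n\vdash e:\theta,\Pi$ infer $\Delta;n\vdash\mathtt{check}\ p\ \mathtt{for}\ e:\theta,\Pi\cup\{p\}$; from $\Delta;n\vdash e:\theta,(\Pi\sqcup_n\{p\})$ infer $\Delta;n\vdash\mathtt{dopriv}\ p\ \mathtt{in}\ e:\theta,\Pi$; from $\Delta;n'\vdash e:\theta,\Pi$ and $\Pi\subseteq\mathcal{A}(n')$ infer $\Delta;n\vdash\mathtt{signs}\ n'\ e:\theta,\Pi$; from $\Delta;n\vdash e_1:\theta,\Pi_1$ and $\Delta;n\vdash e_2:\theta,\Pi_2$ infer $\Delta;n\vdash\mathtt{test}\ p\ \mathtt{then}\ e_1\ \mathtt{else}\ e_2:\theta,\Pi_1\cup\Pi_2$. *)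

From Stdlib Require Import Arith ClassicalEpsilon ClassicalDescription.



Definition pset (V : Type) := V -> Prop.
Definition psubset {V} (A B : pset V) : Prop := forall x, A x -> B x.
Definition pempty {V} : pset V := fun _ => False.
Definition psingle {V} (p : V) : pset V := fun q => q = p.
Definition punion {V} (A B : pset V) : pset V := fun q => A q \/ B q.
Definition pinter {V} (A B : pset V) : pset V := fun q => A q /\ B q.

Definition sqcup {Pr Pv : Type} (A : Pr -> pset Pv) (n : Pr) (P : pset Pv) (p : Pv)
  : pset Pv :=
  if excluded_middle_informative (A n p) then punion P (psingle p) else P.

Definition var := nat.

Inductive ty := TBool | TArr (t1 t2 : ty).

Inductive expr (Pr Pv : Type) :=
| ETrue
| EVar (x : var)
| EIf (e e1 e2 : expr Pr Pv)
| ELam (x : var) (e : expr Pr Pv)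
| EApp (e1 e2 : expr Pr Pv)
| ELetrec (f x : var) (e1 e2 : expr Pr Pv)
| ESigns (n : Pr) (e : expr Pr Pv)
| EDopriv (p : Pv) (e : expr Pr Pv)
| ECheck (p : Pv) (e : expr Pr Pv)
| ETest (p : Pv) (e1 e2 : expr Pr Pv).
Arguments ETrue {Pr Pv}.
Arguments EVar {Pr Pv} x.
Arguments EIf {Pr Pv} e e1 e2.
Arguments ELam {Pr Pv} x e.
Arguments EApp {Pr Pv} e1 e2.
Arguments ELetrec {Pr Pv} f x e1 e2.
Arguments ESigns {Pr Pv} n e.
Arguments EDopriv {Pr Pv} p e.
Arguments ECheck {Pr Pv} p e.
Arguments ETest {Pr Pv} p e1 e2.

Definition ext {T} (D : var -> option T) (x : var) (t : T) : var -> option T :=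
  fun y => if Nat.eqb y x then Some t else D y.
Definition emptyc {T} : var -> option T := fun _ => None.

Definition ctx := var -> option ty.

Inductive has_type {Pr Pv : Type} : ctx -> expr Pr Pv -> ty -> Type :=
| HT_true D : has_type D ETrue TBool
| HT_var D x t : D x = Some t -> has_type D (EVar x) t
| HT_if D e e1 e2 t :
    has_type D e TBool -> has_type D e1 t -> has_type D e2 t ->
    has_type D (EIf e e1 e2) t
| HT_lam D x e t1 t2 :
    has_type (ext D x t1) e t2 -> has_type D (ELam x e) (TArr t1 t2)
| HT_app D e1 e2 t1 t2 :
    has_type D e1 (TArr t1 t2) -> has_type D e2 t1 -> has_type D (EApp e1 e2) t2
| HT_letrec D f x e1 e2 t1 t2 t :
    has_type (ext (ext D f (TArr t1 t2)) x t1) e1 t2 ->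
    has_type (ext D f (TArr t1 t2)) e2 t ->
    has_type D (ELetrec f x e1 e2) t
| HT_signs D n e t : has_type D e t -> has_type D (ESigns n e) t
| HT_dopriv D p e t : has_type D e t -> has_type D (EDopriv p e) t
| HT_check D p e t : has_type D e t -> has_type D (ECheck p e) t
| HT_test D p e1 e2 t :
    has_type D e1 t -> has_type D e2 t -> has_type D (ETest p e1 e2) t.

Inductive lift (A : Type) := Bot | Star | Val (a : A).
Arguments Bot {A}.
Arguments Star {A}.
Arguments Val {A} a.

(** Carriers: [[bool]] = bool, [[t1 -> t2]] = P(Priv) -> [[t1]] -> [[t2]]_{⊥⋆}.
    The restriction to continuous functions and the order are given by [cpo]. *)
Fixpoint sem (Pv : Type) (t : ty) : Type :=
  match t with
  | TBool => bool
  | TArr t1 t2 => pset Pv -> sem Pv t1 -> lift (sem Pv t2)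
  end.

Definition leL {A} (le : A -> A -> Prop) (u v : lift A) : Prop :=
  u = Bot \/ u = v \/ exists a b, u = Val a /\ v = Val b /\ le a b.
Definition domL {A} (dm : A -> Prop) (u : lift A) : Prop :=
  u = Bot \/ u = Star \/ exists a, u = Val a /\ dm a.

Definition chain {A} (dm : A -> Prop) (le : A -> A -> Prop) (c : nat -> A) : Prop :=
  (forall k, dm (c k)) /\ (forall k, le (c k) (c (S k))).
Definition is_lub {A} (dm : A -> Prop) (le : A -> A -> Prop) (c : nat -> A) (x : A)
  : Prop :=
  dm x /\ (forall k, le (c k) x) /\
  (forall y, dm y -> (forall k, le (c k) y) -> le x y).

(** Elements of
    [[t1 -> t2]] are the continuous (monotone, lub-preserving) functions,
    P(Privileges) being discretely ordered; the order is pointwise. *)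
Fixpoint cpo (Pv : Type) (t : ty) : (sem Pv t -> Prop) * (sem Pv t -> sem Pv t -> Prop) :=
  match t return (sem Pv t -> Prop) * (sem Pv t -> sem Pv t -> Prop) with
  | TBool => (fun _ => True, fun a b => a = b)
  | TArr t1 t2 =>
      let d1 := fst (cpo Pv t1) in let l1 := snd (cpo Pv t1) in
      let d2 := fst (cpo Pv t2) in let l2 := snd (cpo Pv t2) in
      ((fun f : sem Pv (TArr t1 t2) =>
          (forall P d, d1 d -> domL d2 (f P d)) /\
          (forall P d d', d1 d -> d1 d' -> l1 d d' -> leL l2 (f P d) (f P d')) /\
          (forall P c x, chain d1 l1 c -> is_lub d1 l1 c x ->
             is_lub (domL d2) (leL l2) (fun k => f P (c k)) (f P x))),
       (fun f g : sem Pv (TArr t1 t2) => forall P d, d1 d -> leL l2 (f P d) (g P d)))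
  end.

Definition dom (Pv : Type) (t : ty) : sem Pv t -> Prop := fst (cpo Pv t).
Definition le (Pv : Type) (t : ty) : sem Pv t -> sem Pv t -> Prop := snd (cpo Pv t).

(** least fixed point of G in the domain (dm, le); [dflt] is only used if
    no least fixed point exists (which does not happen for continuous G). *)
Definition lfp {A} (dm : A -> Prop) (le : A -> A -> Prop) (G : A -> A) (dflt : A) : A :=
  epsilon (inhabits dflt)
    (fun g => dm g /\ le (G g) g /\ le g (G g) /\
       forall g', dm g' -> le (G g') g' -> le g' (G g') -> le g g').

Definition envty (Pv : Type) (o : option ty) : Type :=
  match o with None => unit | Some t => sem Pv t end.
Definition env (Pv : Type) (D : ctx) : Type := forall y, envty Pv (D y).
Definition empty_env (Pv : Type) : env Pv emptyc := fun _ => tt.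

Definition upd {Pv : Type} {D : ctx} (h : env Pv D) (x : var) (t : ty) (d : sem Pv t)
  : env Pv (ext D x t) :=
  fun y => match Nat.eqb y x as b return envty Pv (if b then Some t else D y) with
           | true => d
           | false => h y
           end.

Definition lookup {Pv : Type} {D : ctx} {x : var} {t : ty} (h : env Pv D)
  (Hx : D x = Some t) : sem Pv t :=
  match Hx in _ = o return envty Pv o with eq_refl => h x end.

Definition bindL {A B} (u : lift A) (k : A -> lift B) : lift B :=
  match u with Bot => Bot | Star => Star | Val a => k a end.

Fixpoint den {Pr Pv : Type} (A : Pr -> pset Pv) {D : ctx} {e : expr Pr Pv} {t : ty}
  (d : has_type D e t) {struct d} : Pr -> pset Pv -> env Pv D -> lift (sem Pv t) :=
  match d in has_type D e t return Pr -> pset Pv -> env Pv D -> lift (sem Pv t) with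
  | HT_true _ => fun n P h => Val true
  | HT_var _ _ _ Hx => fun n P h => Val (lookup h Hx)
  | HT_if _ _ _ _ _ d0 d1 d2 => fun n P h =>
      bindL (den A d0 n P h) (fun b : bool => if b then den A d1 n P h else den A d2 n P h)
  | HT_lam _ x _ t1 t2 d0 => fun n P h =>
      Val ((fun P' (v : sem Pv t1) => den A d0 n P' (upd h x t1 v)) : sem Pv (TArr t1 t2))
  | HT_app _ _ _ t1 t2 d1 d2 => fun n P h =>
      bindL (den A d1 n P h) (fun f : sem Pv (TArr t1 t2) =>
        bindL (den A d2 n P h) (fun v => f P v))
  | HT_letrec _ f x _ _ t1 t2 _ d1 d2 => fun n P h =>
      let G := fun g : sem Pv (TArr t1 t2) =>
        ((fun P' (v : sem Pv t1) =>
            den A d1 n P' (upd (upd h f (TArr t1 t2) g) x t1 v)) : sem Pv (TArr t1 t2)) in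
      den A d2 n P
        (upd h f (TArr t1 t2)
           (lfp (dom Pv (TArr t1 t2)) (le Pv (TArr t1 t2)) G
                ((fun _ _ => Bot) : sem Pv (TArr t1 t2))))
  | HT_signs _ n' _ _ d0 => fun n P h => den A d0 n' (pinter P (A n')) h
  | HT_dopriv _ p _ _ d0 => fun n P h => den A d0 n (sqcup A n P p) h
  | HT_check _ p _ _ d0 => fun n P h =>
      if excluded_middle_informative (P p) then den A d0 n P h else Star
  | HT_test _ p _ _ _ d1 d2 => fun n P h =>
      if excluded_middle_informative (P p) then den A d1 n P h else den A d2 n P h
  end.

Inductive aty (Pv : Type) := ABool | AArr (th1 : aty Pv) (Pi : pset Pv) (th2 : aty Pv).
Arguments ABool {Pv}.
Arguments AArr {Pv} th1 Pi th2.

Fixpoint erase {Pv} (th : aty Pv) : ty :=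
  match th with
  | ABool => TBool
  | AArr th1 _ th2 => TArr (erase th1) (erase th2)
  end.

Inductive subty {Pv} : aty Pv -> aty Pv -> Prop :=
| sub_bool : subty ABool ABool
| sub_arr th1 Pi1 th1' th2 Pi2 th2' :
    subty th2 th1 -> subty th1' th2' -> psubset Pi1 Pi2 ->
    subty (AArr th1 Pi1 th1') (AArr th2 Pi2 th2').

Inductive anal {Pr Pv : Type} (A : Pr -> pset Pv)
  : (var -> option (aty Pv)) -> Pr -> expr Pr Pv -> aty Pv -> pset Pv -> Prop :=
| AN_true G n : anal A G n ETrue ABool pempty
| AN_var G n x th : G x = Some th -> anal A G n (EVar x) th pempty
| AN_lam G n x e th1 th2 Pi :
    anal A (ext G x th1) n e th2 Pi -> anal A G n (ELam x e) (AArr th1 Pi th2) pempty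
| AN_app G n e1 e2 th1 th1' th2 Pi Pi1 Pi2 :
    anal A G n e1 (AArr th1 Pi th2) Pi1 -> anal A G n e2 th1' Pi2 -> subty th1' th1 ->
    anal A G n (EApp e1 e2) th2 (punion Pi (punion Pi1 Pi2))
| AN_if G n e e1 e2 th Pi1 Pi2 Pi3 :
    anal A G n e ABool Pi1 -> anal A G n e1 th Pi2 -> anal A G n e2 th Pi3 ->
    anal A G n (EIf e e1 e2) th (punion Pi1 (punion Pi2 Pi3))
| AN_letrec G n f x e1 e2 th1 th2 th Pi Pi1 :
    anal A (ext (ext G f (AArr th1 Pi th2)) x th1) n e1 th2 Pi ->
    anal A (ext G f (AArr th1 Pi th2)) n e2 th Pi1 ->
    anal A G n (ELetrec f x e1 e2) th (punion Pi Pi1)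
| AN_check G n p e th Pi :
    anal A G n e th Pi -> anal A G n (ECheck p e) th (punion Pi (psingle p))
| AN_dopriv G n p e th Pi :
    anal A G n e th (sqcup A n Pi p) -> anal A G n (EDopriv p e) th Pi
| AN_signs G n n' e th Pi :
    anal A G n' e th Pi -> psubset Pi (A n') -> anal A G n (ESigns n' e) th Pi
| AN_test G n p e1 e2 th Pi1 Pi2 :
    anal A G n e1 th Pi1 -> anal A G n e2 th Pi2 ->
    anal A G n (ETest p e1 e2) th (punion Pi1 Pi2).

From Stdlib Require Import Arith Lia ClassicalEpsilon ClassicalDescription Classical.

(* The proof is by a logical relation [safe th t v]: a value of type [t] used at
   the annotated type [th], under privilege sets containing the annotations of
   [th], never yields [Star].  The relation is closed under subtyping, which
   handles application, and it is admissible, because a chain avoiding [Star]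
   never has [Star] as its lub; hence it holds of recursive functions by
   fixpoint induction.  Fixpoint induction requires the [lfp] of the semantics
   to be the lub of its Kleene chain, and this rests on every type denoting a
   cpo and every denotation being continuous in its environment. *)

Section Order.
Context {X : Type} {dm : X -> Prop} {l : X -> X -> Prop}.
Context (l_refl : forall a, l a a) (l_trans : forall a b c, l a b -> l b c -> l a c).

Lemma chain_mono c : chain dm l c -> forall k k', k <= k' -> l (c k) (c k').
Proof. intros [_ Hc] k k' H. induction H; eauto. Qed.

Lemma lub_equiv c x y : is_lub dm l c x -> dm y -> l x y -> l y x -> is_lub dm l c y.
Proof.
  intros (Hx&Hx1&Hx2) Hy Hxy Hyx. split; [exact Hy|split].
  - intros k. exact (l_trans _ _ _ (Hx1 k) Hxy).
  - intros z Hz Hz'. exact (l_trans _ _ _ Hyx (Hx2 z Hz Hz')).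
Qed.

Lemma lub_const x : dm x -> is_lub dm l (fun _ => x) x.
Proof. intros Hx. repeat split; auto. intros y _ Hy. exact (Hy 0). Qed.

Lemma lub_eventually c c' k0 x : chain dm l c -> chain dm l c' ->
  (forall k, k0 <= k -> c k = c' k) -> is_lub dm l c x -> is_lub dm l c' x.
Proof.
  intros Hc Hc' E (Hx&Hx1&Hx2). repeat split; auto.
  - intros k. apply l_trans with (c' (max k k0)).
    + apply chain_mono; auto; lia.
    + rewrite <- E by lia. auto.
  - intros z Hz Hz'. apply Hx2; auto. intros k. apply l_trans with (c (max k k0)).
    + apply chain_mono; auto; lia.
    + rewrite E by lia. auto.
Qed.

End Order.

Lemma lub_unique {X} {dm : X -> Prop} {l} c x y :
  is_lub dm l c x -> is_lub dm l c y -> l x y /\ l y x.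
Proof. intros (Hx&Hx1&Hx2) (Hy&Hy1&Hy2). split; auto. Qed.

Lemma lub_ext {X} {dm : X -> Prop} {l} c c' x :
  (forall k, c k = c' k) -> is_lub dm l c x -> is_lub dm l c' x.
Proof.
  intros E (Hx&Hx1&Hx2). repeat split; auto.
  - intros k; rewrite <- E; auto.
  - intros z Hz Hz'. apply Hx2; auto. intros k; rewrite E; auto.
Qed.

Section LiftOrder.
Context {X : Type} {l : X -> X -> Prop}.

Lemma leL_refl u : leL l u u.
Proof. right; left; reflexivity. Qed.

Lemma leL_Val a b : l a b -> leL l (Val a) (Val b).
Proof. intros; right; right; eauto. Qed.

Lemma leL_Star_inv v : leL l Star v -> v = Star.
Proof. intros [H|[H|(a&b&H&_)]]; congruence. Qed.

Lemma leL_Bot_inv u : leL l u Bot -> u = Bot.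
Proof. intros [H|[H|(a&b&_&H&_)]]; congruence. Qed.

Context (l_refl : forall a, l a a).

Lemma leL_Val_inv a v : leL l (Val a) v -> exists b, v = Val b /\ l a b.
Proof.
  intros [H|[<-|(a'&b&H&->&Hl)]]; [discriminate| eauto |].
  injection H as <-; eauto.
Qed.

Context (l_trans : forall a b c, l a b -> l b c -> l a c).

Lemma leL_trans u v w : leL l u v -> leL l v w -> leL l u w.
Proof.
  intros [->|[->|(a&b&->&->&Hab)]] Hvw; [left; reflexivity | exact Hvw |].
  apply leL_Val_inv in Hvw as (c&->&Hbc). apply leL_Val; eauto.
Qed.

End LiftOrder.

Lemma domL_Val_inv {X} {dm : X -> Prop} a : domL dm (Val a) -> dm a.
Proof. intros [H|[H|(b&H&Hb)]]; try discriminate. injection H as ->; exact Hb. Qed.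

Section LiftLub.
Context {X : Type} {dm : X -> Prop} {l : X -> X -> Prop}.
Context (l_refl : forall a, l a a) (l_trans : forall a b c, l a b -> l b c -> l a c).

Notation dmL := (domL dm).
Notation lL := (leL l).

Lemma lift_chain_mono c : chain dmL lL c -> forall k k', k <= k' -> lL (c k) (c k').
Proof. apply (chain_mono leL_refl (leL_trans l_refl l_trans)). Qed.

Lemma lub_lift_Star c k : chain dmL lL c -> c k = Star -> is_lub dmL lL c Star.
Proof.
  intros Hc Hk. repeat split.
  - right; left; reflexivity.
  - intros k'. destruct (Nat.le_gt_cases k k') as [H|H].
    + pose proof (lift_chain_mono c Hc k k' H) as Hm.
      rewrite Hk in Hm. apply leL_Star_inv in Hm. rewrite Hm. apply leL_refl.
    + rewrite <- Hk. apply lift_chain_mono; auto; lia.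
  - intros z _ Hz. specialize (Hz k). rewrite Hk in Hz.
    apply leL_Star_inv in Hz. rewrite Hz. apply leL_refl.
Qed.

Lemma lub_lift_Bot c : (forall k, c k = Bot) -> is_lub dmL lL c Bot.
Proof.
  intros Hc. apply lub_ext with (fun _ => Bot); auto.
  apply (lub_const leL_refl). left; reflexivity.
Qed.

(* [v k] is the value at index [max k k0], so [v] is constant up to [k0]. *)
Lemma lift_chain_cases c : chain dmL lL c ->
  (exists k, c k = Star) \/ (forall k, c k = Bot) \/
  (exists k0 v, chain dm l v /\ forall k, c (max k k0) = Val (v k)).
Proof.
  intros Hc.
  destruct (classic (exists k, c k = Star)) as [HS|HnS]; [left; exact HS|right].
  destruct (classic (exists k a, c k = Val a)) as [(k0&a0&Hk0)|HnV].
  - right. exists k0, (fun k => match c (max k k0) with Val b => b | _ => a0 end).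
    assert (Hv : forall k, c (max k k0) = Val (match c (max k k0) with Val b => b | _ => a0 end)).
    { intros k. pose proof (lift_chain_mono c Hc k0 (max k k0) ltac:(lia)) as Hm.
      rewrite Hk0 in Hm. apply (leL_Val_inv l_refl) in Hm as (b&->&_). reflexivity. }
    split; [split|]; auto; intros k.
    + apply (domL_Val_inv (dm := dm)). rewrite <- Hv. apply Hc.
    + pose proof (lift_chain_mono c Hc (max k k0) (max (S k) k0) ltac:(lia)) as Hm.
      rewrite Hv, (Hv (S k)) in Hm. apply (leL_Val_inv l_refl) in Hm as (b&E&Hb).
      injection E as <-. exact Hb.
  - left. intros k. destruct (proj1 Hc k) as [H|[H|(a&H&_)]]; auto;
      exfalso; eauto.
Qed.

Lemma lub_lift_Val c k0 v x : chain dmL lL c ->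
  (forall k, c (max k k0) = Val (v k)) -> is_lub dm l v x -> is_lub dmL lL c (Val x).
Proof.
  intros Hc Hv (Hx&Hx1&Hx2). repeat split.
  - right; right; eauto.
  - intros k. apply (leL_trans l_refl l_trans) with (c (max k k0)).
    + apply lift_chain_mono; auto; lia.
    + rewrite Hv. apply leL_Val, Hx1.
  - intros z Hz Hz'. pose proof (Hz' k0) as H0. rewrite <- (Nat.max_id k0), Hv in H0.
    apply (leL_Val_inv l_refl) in H0 as (y&->&_). apply leL_Val, Hx2.
    + exact (domL_Val_inv y Hz).
    + intros k. specialize (Hz' (max k k0)). rewrite Hv in Hz'.
      apply (leL_Val_inv l_refl) in Hz' as (b&E&Hb). injection E as <-. exact Hb.
Qed.

Lemma lift_lub_cases c U : chain dmL lL c -> is_lub dmL lL c U ->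
  (U = Star /\ exists k, c k = Star) \/ (U = Bot /\ forall k, c k = Bot) \/
  (exists k0 v a, U = Val a /\ chain dm l v /\ is_lub dm l v a /\
     forall k, c (max k k0) = Val (v k)).
Proof.
  intros Hc HU. destruct HU as (HUd&HUub&HUleast).
  destruct (lift_chain_cases c Hc) as [[k Hk]|[HB|(k0&v&Hv&Hcv)]].
  - left. split; eauto. apply (leL_Star_inv (l := l)). rewrite <- Hk. apply HUub.
  - right; left. split; auto. apply (leL_Bot_inv (l := l)), HUleast.
    + left; reflexivity.
    + intros k. rewrite HB. apply leL_refl.
  - right; right. pose proof (HUub k0) as H0. rewrite <- (Nat.max_id k0), Hcv in H0.
    apply (leL_Val_inv l_refl) in H0 as (a&->&_).
    assert (Hvc : forall k, lL (c k) (Val (v k))).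
    { intros k. rewrite <- Hcv. apply lift_chain_mono; auto; lia. }
    exists k0, v, a. split; [reflexivity|split; [exact Hv|split; [split; [|split]|exact Hcv]]].
    + exact (domL_Val_inv a HUd).
    + intros k. specialize (HUub (max k k0)). rewrite Hcv in HUub.
      apply (leL_Val_inv l_refl) in HUub as (b&E&Hb). injection E as <-. exact Hb.
    + intros y Hy Hyub.
      assert (Hay : lL (Val a) (Val y)).
      { apply HUleast; [right; right; eauto|]. intros k.
        apply (leL_trans l_refl l_trans) with (Val (v k)); auto. apply leL_Val, Hyub. }
      apply (leL_Val_inv l_refl) in Hay as (b&E&Hb). injection E as <-. exact Hb.
Qed.

Lemma lift_lub_exists : (forall v, chain dm l v -> exists x, is_lub dm l v x) ->
  forall c, chain dmL lL c -> exists U, is_lub dmL lL c U.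
Proof.
  intros Hlub c Hc. destruct (lift_chain_cases c Hc) as [[k Hk]|[HB|(k0&v&Hv&Hcv)]].
  - exists Star. exact (lub_lift_Star c k Hc Hk).
  - exists Bot. exact (lub_lift_Bot c HB).
  - destruct (Hlub v Hv) as [x Hx]. exists (Val x). exact (lub_lift_Val c k0 v x Hc Hcv Hx).
Qed.

End LiftLub.

Section Bind.
Context {X Y : Type} {dmX : X -> Prop} {lX : X -> X -> Prop}
  {dmY : Y -> Prop} {lY : Y -> Y -> Prop}.
Context (lX_refl : forall a, lX a a) (lX_trans : forall a b c, lX a b -> lX b c -> lX a c).
Context (lY_refl : forall a, lY a a) (lY_trans : forall a b c, lY a b -> lY b c -> lY a c).

Lemma bindL_dom u (F : X -> lift Y) : domL dmX u ->
  (forall a, dmX a -> domL dmY (F a)) -> domL dmY (bindL u F).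
Proof.
  intros Hu HF. destruct u as [| |a]; simpl.
  - left; reflexivity.
  - right; left; reflexivity.
  - exact (HF a (domL_Val_inv a Hu)).
Qed.

Lemma bindL_mono u u' (F F' : X -> lift Y) : domL dmX u -> domL dmX u' -> leL lX u u' ->
  (forall a a', dmX a -> dmX a' -> lX a a' -> leL lY (F a) (F' a')) ->
  leL lY (bindL u F) (bindL u' F').
Proof.
  intros Hu Hu' Huu HF. destruct u as [| |a]; simpl.
  - left; reflexivity.
  - apply leL_Star_inv in Huu. subst u'. apply leL_refl.
  - apply (leL_Val_inv lX_refl) in Huu as (a'&->&Ha). simpl.
    apply HF; auto; apply domL_Val_inv; assumption.
Qed.

Lemma bindL_cont c U (F : nat -> X -> lift Y) Finf :
  chain (domL dmX) (leL lX) c -> is_lub (domL dmX) (leL lX) c U ->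
  (forall k a, dmX a -> domL dmY (F k a)) ->
  (forall k k' a a', k <= k' -> dmX a -> dmX a' -> lX a a' -> leL lY (F k a) (F k' a')) ->
  (forall v x, chain dmX lX v -> is_lub dmX lX v x ->
     is_lub (domL dmY) (leL lY) (fun k => F k (v k)) (Finf x)) ->
  is_lub (domL dmY) (leL lY) (fun k => bindL (c k) (F k)) (bindL U Finf).
Proof.
  intros Hc HU HFd HFm Hdiag.
  assert (Hbc : chain (domL dmY) (leL lY) (fun k => bindL (c k) (F k))).
  { split; intros k.
    - apply bindL_dom; auto. apply Hc.
    - apply bindL_mono; try apply Hc. intros; apply HFm; auto. }
  destruct (lift_lub_cases lX_refl lX_trans c U Hc HU)
    as [(->&k&Hk)|[(->&HB)|(k0&v&a&->&Hv&Ha&Hcv)]]; simpl.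
  - apply (lub_lift_Star lY_refl lY_trans _ k Hbc). rewrite Hk. reflexivity.
  - apply lub_lift_Bot. intros k. rewrite HB. reflexivity.
  - apply (lub_eventually leL_refl (leL_trans lY_refl lY_trans) (fun k => F k (v k)) _ k0).
    + split; intros k.
      * apply HFd, Hv.
      * apply HFm; auto; apply Hv.
    + exact Hbc.
    + intros k Hk. pose proof (Hcv k) as E. rewrite Nat.max_l in E by exact Hk.
      rewrite E. reflexivity.
    + apply Hdiag; auto.
Qed.

End Bind.

Section Types.
Context {Pv : Type}.

Lemma dom_arr t1 t2 (f : sem Pv (TArr t1 t2)) :
  dom Pv (TArr t1 t2) f <->
  (forall P d, dom Pv t1 d -> domL (dom Pv t2) (f P d)) /\
  (forall P d d', dom Pv t1 d -> dom Pv t1 d' -> le Pv t1 d d' ->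
     leL (le Pv t2) (f P d) (f P d')) /\
  (forall P c x, chain (dom Pv t1) (le Pv t1) c -> is_lub (dom Pv t1) (le Pv t1) c x ->
     is_lub (domL (dom Pv t2)) (leL (le Pv t2)) (fun k => f P (c k)) (f P x)).
Proof. reflexivity. Qed.

Lemma le_arr t1 t2 (f g : sem Pv (TArr t1 t2)) :
  le Pv (TArr t1 t2) f g <-> (forall P d, dom Pv t1 d -> leL (le Pv t2) (f P d) (g P d)).
Proof. reflexivity. Qed.

Lemma le_refl t (x : sem Pv t) : le Pv t x x.
Proof. destruct t; [reflexivity|]. apply le_arr; intros; apply leL_refl. Qed.

Lemma le_trans t (x y z : sem Pv t) : le Pv t x y -> le Pv t y z -> le Pv t x z.
Proof.
  revert x y z; induction t as [|t1 _ t2 IH2]; intros x y z Hxy Hyz.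
  - exact (eq_trans Hxy Hyz).
  - apply le_arr; intros P d Hd.
    apply (leL_trans (le_refl t2) IH2) with (y P d); [apply Hxy | apply Hyz]; exact Hd.
Qed.

Lemma leL_trans_ty t (u v w : lift (sem Pv t)) :
  leL (le Pv t) u v -> leL (le Pv t) v w -> leL (le Pv t) u w.
Proof. apply leL_trans; [apply le_refl | apply le_trans]. Qed.

Lemma chain_mono_ty t (c : nat -> sem Pv t) : chain (dom Pv t) (le Pv t) c ->
  forall k k', k <= k' -> le Pv t (c k) (c k').
Proof. apply chain_mono; [apply le_refl | apply le_trans]. Qed.

Lemma lift_chain_mono_ty t (c : nat -> lift (sem Pv t)) :
  chain (domL (dom Pv t)) (leL (le Pv t)) c ->
  forall k k', k <= k' -> leL (le Pv t) (c k) (c k').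
Proof. apply lift_chain_mono; [apply le_refl | apply le_trans]. Qed.

Section Arrow.
Variables t1 t2 : ty.
Notation T := (TArr t1 t2).

Lemma arr_dom_app (f : sem Pv T) P d :
  dom Pv T f -> dom Pv t1 d -> domL (dom Pv t2) (f P d).
Proof. intros Hf. apply dom_arr in Hf. apply Hf. Qed.

Lemma arr_mono (f : sem Pv T) P d d' :
  dom Pv T f -> dom Pv t1 d -> dom Pv t1 d' -> le Pv t1 d d' ->
  leL (le Pv t2) (f P d) (f P d').
Proof. intros Hf. apply dom_arr in Hf. apply Hf. Qed.

Lemma arr_cont (f : sem Pv T) P c x :
  dom Pv T f -> chain (dom Pv t1) (le Pv t1) c -> is_lub (dom Pv t1) (le Pv t1) c x ->
  is_lub (domL (dom Pv t2)) (leL (le Pv t2)) (fun k => f P (c k)) (f P x).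
Proof. intros Hf. apply dom_arr in Hf. apply Hf. Qed.

Lemma arr_app_mono (f f' : sem Pv T) P d d' :
  dom Pv T f -> le Pv T f f' -> dom Pv t1 d -> dom Pv t1 d' -> le Pv t1 d d' ->
  leL (le Pv t2) (f P d) (f' P d').
Proof.
  intros Hf Hff Hd Hd' Hdd. apply leL_trans_ty with (f P d').
  - apply arr_mono; auto.
  - apply Hff; auto.
Qed.

Lemma chain_arr_app (f : nat -> sem Pv T) P d :
  chain (dom Pv T) (le Pv T) f -> dom Pv t1 d ->
  chain (domL (dom Pv t2)) (leL (le Pv t2)) (fun k => f k P d).
Proof.
  intros [Hf Hfl] Hd. split; intros k.
  - apply arr_dom_app; auto.
  - apply (Hfl k); auto.
Qed.

Lemma lub_arr_of_pointwise (f : nat -> sem Pv T) F : dom Pv T F ->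
  (forall P d, dom Pv t1 d ->
     is_lub (domL (dom Pv t2)) (leL (le Pv t2)) (fun k => f k P d) (F P d)) ->
  is_lub (dom Pv T) (le Pv T) f F.
Proof.
  intros HF Hpw. split; [exact HF|split].
  - intros k. apply le_arr. intros P d Hd. apply (Hpw P d Hd).
  - intros g Hg Hub. apply le_arr. intros P d Hd. apply (Hpw P d Hd).
    + apply arr_dom_app; auto.
    + intros k. apply (Hub k); auto.
Qed.

(* Continuity of [F] is the exchange of the two lubs over [k] and [j]. *)
Lemma pointwise_lub_dom (f : nat -> sem Pv T) F : chain (dom Pv T) (le Pv T) f ->
  (forall P d, dom Pv t1 d ->
     is_lub (domL (dom Pv t2)) (leL (le Pv t2)) (fun k => f k P d) (F P d)) ->
  dom Pv T F.
Proof.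
  intros Hf HF.
  assert (HFm : forall P d d', dom Pv t1 d -> dom Pv t1 d' -> le Pv t1 d d' ->
            leL (le Pv t2) (F P d) (F P d')).
  { intros P d d' Hd Hd' Hdd. apply (HF P d Hd); [apply (HF P d' Hd')|].
    intros k. apply leL_trans_ty with (f k P d').
    - apply arr_mono; auto. apply Hf.
    - apply (HF P d' Hd'). }
  apply dom_arr. split; [|split]; [intros P d Hd; apply (HF P d Hd) | exact HFm |].
  intros P e y He Hy. destruct Hy as (Hyd&Hyub&Hyleast).
  split; [apply (HF P y Hyd)|split].
  - intros j. apply HFm; auto. apply He.
  - intros z Hz Hzub. apply (HF P y Hyd); auto. intros k.
    apply (arr_cont (f k) P e y (proj1 Hf k) He (conj Hyd (conj Hyub Hyleast))); auto.
    intros j. apply leL_trans_ty with (F P (e j)); [|apply Hzub].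
    apply (HF P (e j) (proj1 He j)).
Qed.

Lemma pointwise_lub_exists :
  (forall c, chain (dom Pv t2) (le Pv t2) c -> exists x, is_lub (dom Pv t2) (le Pv t2) c x) ->
  forall f : nat -> sem Pv T, chain (dom Pv T) (le Pv T) f ->
  exists F : sem Pv T, forall P d, dom Pv t1 d ->
    is_lub (domL (dom Pv t2)) (leL (le Pv t2)) (fun k => f k P d) (F P d).
Proof.
  intros Hlub2 f Hf.
  exists (fun P d => epsilon (inhabits Bot) (fun u => dom Pv t1 d ->
            is_lub (domL (dom Pv t2)) (leL (le Pv t2)) (fun k => f k P d) u)).
  intros P d Hd.
  apply (epsilon_spec (inhabits Bot) (fun u => dom Pv t1 d ->
           is_lub (domL (dom Pv t2)) (leL (le Pv t2)) (fun k => f k P d) u)); auto.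
  destruct (lift_lub_exists (le_refl t2) (@le_trans t2) Hlub2 (fun k => f k P d))
    as [u Hu]; eauto.
  apply chain_arr_app; auto.
Qed.

End Arrow.

Lemma lub_exists t :
  forall c, chain (dom Pv t) (le Pv t) c -> exists x, is_lub (dom Pv t) (le Pv t) c x.
Proof.
  induction t as [|t1 _ t2 IH2]; intros c Hc.
  - exists (c 0). apply lub_ext with (fun _ => c 0); [|apply lub_const; [apply le_refl|exact I]].
    intros k. induction k; [reflexivity|]. rewrite IHk. apply (proj2 Hc k).
  - destruct (pointwise_lub_exists t1 t2 IH2 c Hc) as [F HF].
    exists F. apply lub_arr_of_pointwise; auto. apply (pointwise_lub_dom t1 t2 c); auto.
Qed.

Section ArrowLub.
Variables t1 t2 : ty.
Notation T := (TArr t1 t2).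

Lemma lub_arr_pointwise (f : nat -> sem Pv T) F :
  chain (dom Pv T) (le Pv T) f -> is_lub (dom Pv T) (le Pv T) f F ->
  forall P d, dom Pv t1 d ->
  is_lub (domL (dom Pv t2)) (leL (le Pv t2)) (fun k => f k P d) (F P d).
Proof.
  intros Hf HF P d Hd.
  destruct (pointwise_lub_exists t1 t2 (lub_exists t2) f Hf) as [G HG].
  pose proof (lub_arr_of_pointwise t1 t2 f G (pointwise_lub_dom t1 t2 f G Hf HG) HG) as HG'.
  destruct (lub_unique f F G HF HG') as [HFG HGF].
  apply (lub_equiv (@leL_trans_ty t2)) with (G P d); auto.
  apply arr_dom_app; auto. apply HF.
Qed.

Lemma lub_arr_app_diag (f : nat -> sem Pv T) F (v : nat -> sem Pv t1) V P :
  chain (dom Pv T) (le Pv T) f -> is_lub (dom Pv T) (le Pv T) f F ->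
  chain (dom Pv t1) (le Pv t1) v -> is_lub (dom Pv t1) (le Pv t1) v V ->
  is_lub (domL (dom Pv t2)) (leL (le Pv t2)) (fun k => f k P (v k)) (F P V).
Proof.
  intros Hf HF Hv HV.
  assert (HFd : dom Pv T F) by apply HF.
  assert (HVd : dom Pv t1 V) by apply HV.
  split; [|split].
  - apply arr_dom_app; auto.
  - intros k. apply leL_trans_ty with (F P (v k)).
    + apply HF; apply Hv.
    + apply arr_mono; auto; apply Hv || apply HV.
  - intros z Hz Hub. apply (arr_cont t1 t2 F P v V HFd Hv HV); auto. intros j.
    apply (lub_arr_pointwise f F Hf HF P (v j) (proj1 Hv j)); auto. intros k.
    apply leL_trans_ty with (f (max k j) P (v j)).
    + apply (chain_mono_ty T f Hf k (max k j)); [lia | apply Hv].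
    + apply leL_trans_ty with (f (max k j) P (v (max k j))); [|apply Hub].
      apply arr_mono; try apply Hf; try apply Hv.
      apply (chain_mono_ty t1 v Hv); lia.
Qed.

End ArrowLub.

Definition condL {t} (u : lift (sem Pv TBool)) (u1 u2 : lift (sem Pv t)) : lift (sem Pv t) :=
  bindL u (fun b : bool => if b then u1 else u2).

Definition appL {t1 t2} (P : pset Pv) (u1 : lift (sem Pv (TArr t1 t2))) (u2 : lift (sem Pv t1))
  : lift (sem Pv t2) :=
  bindL u1 (fun f : sem Pv (TArr t1 t2) => bindL u2 (fun v => f P v)).

Section LiftedOps.
Notation domT t := (domL (dom Pv t)).
Notation leT t := (leL (le Pv t)).

Lemma condL_dom t u (u1 u2 : lift (sem Pv t)) :
  domT TBool u -> domT t u1 -> domT t u2 -> domT t (condL u u1 u2).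
Proof. intros Hu H1 H2. apply (bindL_dom (dmX := dom Pv TBool)); auto. intros [|] _; auto. Qed.

Lemma condL_mono t u u' (u1 u1' u2 u2' : lift (sem Pv t)) :
  domT TBool u -> domT TBool u' -> leT TBool u u' -> leT t u1 u1' -> leT t u2 u2' ->
  leT t (condL u u1 u2) (condL u' u1' u2').
Proof.
  intros Hu Hu' Huu H1 H2. apply (bindL_mono (dmX := dom Pv TBool) (le_refl TBool)); auto.
  intros b b' _ _ <-. destruct b; auto.
Qed.

Lemma condL_cont t c (c1 c2 : nat -> lift (sem Pv t)) U U1 U2 :
  chain (domT TBool) (leT TBool) c -> is_lub (domT TBool) (leT TBool) c U ->
  chain (domT t) (leT t) c1 -> is_lub (domT t) (leT t) c1 U1 ->
  chain (domT t) (leT t) c2 -> is_lub (domT t) (leT t) c2 U2 ->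
  is_lub (domT t) (leT t) (fun k => condL (c k) (c1 k) (c2 k)) (condL U U1 U2).
Proof.
  intros Hc HU Hc1 HU1 Hc2 HU2.
  apply (bindL_cont (dmX := dom Pv TBool) (le_refl TBool) (@le_trans TBool)
           (le_refl t) (@le_trans t)); auto.
  - intros k [|] _; [apply Hc1 | apply Hc2].
  - intros k k' b b' Hk _ _ <-.
    destruct b; apply lift_chain_mono_ty; auto.
  - intros v x _ Hx. apply lub_ext with (fun k => if x then c1 k else c2 k);
      [|destruct x; auto].
    intros k. rewrite (proj1 (proj2 Hx) k). reflexivity.
Qed.

Lemma appL_dom t1 t2 P u1 u2 :
  domT (TArr t1 t2) u1 -> domT t1 u2 -> domT t2 (appL P u1 u2).
Proof.
  intros H1 H2. apply (bindL_dom (dmX := dom Pv (TArr t1 t2))); auto. intros f Hf.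
  apply (bindL_dom (dmX := dom Pv t1)); auto. intros v Hv. apply arr_dom_app; auto.
Qed.

Lemma appL_mono t1 t2 P u1 u1' u2 u2' :
  domT (TArr t1 t2) u1 -> domT (TArr t1 t2) u1' -> leT (TArr t1 t2) u1 u1' ->
  domT t1 u2 -> domT t1 u2' -> leT t1 u2 u2' ->
  leT t2 (appL P u1 u2) (appL P u1' u2').
Proof.
  intros D1 D1' L1 D2 D2' L2.
  apply (bindL_mono (dmX := dom Pv (TArr t1 t2)) (le_refl _)); auto.
  intros f f' Hf Hf' Hff. apply (bindL_mono (dmX := dom Pv t1) (le_refl _)); auto.
  intros v v' Hv Hv' Hvv. apply arr_app_mono; auto.
Qed.

Lemma appL_cont t1 t2 P c1 U1 c2 U2 :
  chain (domT (TArr t1 t2)) (leT (TArr t1 t2)) c1 ->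
  is_lub (domT (TArr t1 t2)) (leT (TArr t1 t2)) c1 U1 ->
  chain (domT t1) (leT t1) c2 -> is_lub (domT t1) (leT t1) c2 U2 ->
  is_lub (domT t2) (leT t2) (fun k => appL P (c1 k) (c2 k)) (appL P U1 U2).
Proof.
  intros Hc1 HU1 Hc2 HU2.
  assert (Hm2 := lift_chain_mono_ty t1 c2 Hc2).
  apply (bindL_cont (dmX := dom Pv (TArr t1 t2)) (le_refl _) (@le_trans _)
           (le_refl _) (@le_trans _)); auto.
  - intros k f Hf. apply (bindL_dom (dmX := dom Pv t1)); [apply Hc2|].
    intros v Hv. apply arr_dom_app; auto.
  - intros k k' f f' Hk Hf Hf' Hff.
    apply (bindL_mono (dmX := dom Pv t1) (le_refl _)); try apply Hc2; auto.
    intros v v' Hv Hv' Hvv. apply arr_app_mono; auto.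
  - intros f F Hf HF.
    apply (bindL_cont (dmX := dom Pv t1) (le_refl _) (@le_trans _) (le_refl _) (@le_trans _));
      auto.
    + intros k v Hv. apply arr_dom_app; auto. apply Hf.
    + intros k k' v v' Hk Hv Hv' Hvv. apply arr_app_mono; auto; [apply Hf|].
      apply (chain_mono_ty _ f Hf k k' Hk).
    + intros v V Hv HV. apply lub_arr_app_diag; auto.
Qed.

End LiftedOps.

Section Env.
Context {D : ctx}.

Definition env_dom (h : env Pv D) : Prop :=
  forall y, match D y as o return envty Pv o -> Prop with
            | Some t => dom Pv t | None => fun _ => True end (h y).
Definition env_le (h h' : env Pv D) : Prop :=
  forall y, match D y as o return envty Pv o -> envty Pv o -> Prop with
            | Some t => le Pv t | None => fun _ _ => True end (h y) (h' y).
Definition env_lub (hc : nat -> env Pv D) (h : env Pv D) : Prop :=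
  forall y, match D y as o return (nat -> envty Pv o) -> envty Pv o -> Prop with
            | Some t => is_lub (dom Pv t) (le Pv t)
            | None => fun _ _ => True end (fun k => hc k y) (h y).
Definition env_chain (hc : nat -> env Pv D) : Prop :=
  (forall k, env_dom (hc k)) /\ (forall k, env_le (hc k) (hc (S k))).

Lemma env_le_refl h : env_le h h.
Proof. intros y. generalize (h y). destruct (D y); [apply le_refl | exact (fun _ => I)]. Qed.

Lemma env_chain_const h : env_dom h -> env_chain (fun _ => h).
Proof. intros Hh. split; intros; [exact Hh | apply env_le_refl]. Qed.

Lemma env_lub_const h : env_dom h -> env_lub (fun _ => h) h.
Proof.
  intros Hh y. specialize (Hh y). revert Hh. generalize (h y).
  destruct (D y); [|auto]. intros; apply lub_const; [apply le_refl | assumption].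
Qed.

Lemma env_lub_dom hc h : env_lub hc h -> env_dom h.
Proof.
  intros H y. specialize (H y). revert H. generalize (fun k => hc k y) (h y).
  destruct (D y); [|auto]. intros c x Hx; apply Hx.
Qed.

Lemma env_lub_ub hc h k : env_lub hc h -> env_le (hc k) h.
Proof.
  intros H y. specialize (H y).
  change (hc k y) with ((fun k => hc k y) k). revert H. generalize (fun k => hc k y) (h y).
  destruct (D y); [|auto]. intros c x Hx. apply Hx.
Qed.

Lemma lookup_dom h x t (Hx : D x = Some t) : env_dom h -> dom Pv t (lookup h Hx).
Proof. intros H. specialize (H x). unfold lookup. revert H. generalize (h x). rewrite Hx. auto. Qed.

Lemma lookup_le h h' x t (Hx : D x = Some t) :
  env_le h h' -> le Pv t (lookup h Hx) (lookup h' Hx).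
Proof.
  intros H. specialize (H x). unfold lookup. revert H. generalize (h x) (h' x). rewrite Hx. auto.
Qed.

Lemma lookup_lub hc h x t (Hx : D x = Some t) : env_lub hc h ->
  is_lub (dom Pv t) (le Pv t) (fun k => lookup (hc k) Hx) (lookup h Hx).
Proof.
  intros H. specialize (H x). unfold lookup. revert H.
  change (fun k => match Hx in _ = o return envty Pv o with eq_refl => hc k x end)
    with (fun k => match Hx in _ = o return envty Pv o with eq_refl => (fun j => hc j x) k end).
  generalize (fun j => hc j x) (h x). rewrite Hx. auto.
Qed.

End Env.

Section EnvUpd.
Context {D : ctx} (x : var) (t : ty).

Lemma upd_dom (h : env Pv D) v : env_dom h -> dom Pv t v -> env_dom (upd h x t v).
Proof. intros H Hv y. specialize (H y). unfold upd, ext. destruct (Nat.eqb y x); auto. Qed.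

Lemma upd_le (h h' : env Pv D) v v' :
  env_le h h' -> le Pv t v v' -> env_le (upd h x t v) (upd h' x t v').
Proof. intros H Hv y. specialize (H y). unfold upd, ext. destruct (Nat.eqb y x); auto. Qed.

Lemma upd_lub (hc : nat -> env Pv D) h (c : nat -> sem Pv t) v :
  env_lub hc h -> is_lub (dom Pv t) (le Pv t) c v ->
  env_lub (fun k => upd (hc k) x t (c k)) (upd h x t v).
Proof. intros H Hv y. specialize (H y). unfold upd, ext. destruct (Nat.eqb y x); auto. Qed.

Lemma env_chain_upd (hc : nat -> env Pv D) (c : nat -> sem Pv t) :
  env_chain hc -> chain (dom Pv t) (le Pv t) c -> env_chain (fun k => upd (hc k) x t (c k)).
Proof.
  intros [H1 H2] [C1 C2]. split; intros k; [apply upd_dom | apply upd_le]; auto.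
Qed.

End EnvUpd.

Section EnvCont.
Context {D : ctx}.

Definition env_cont {t} (phi : env Pv D -> lift (sem Pv t)) : Prop :=
  (forall h, env_dom h -> domL (dom Pv t) (phi h)) /\
  (forall h h', env_dom h -> env_dom h' -> env_le h h' -> leL (le Pv t) (phi h) (phi h')) /\
  (forall hc h, env_chain hc -> env_lub hc h ->
     is_lub (domL (dom Pv t)) (leL (le Pv t)) (fun k => phi (hc k)) (phi h)).

Lemma env_cont_chain {t} (phi : env Pv D -> lift (sem Pv t)) hc :
  env_cont phi -> env_chain hc -> chain (domL (dom Pv t)) (leL (le Pv t)) (fun k => phi (hc k)).
Proof. intros (H1&H2&_) [Hd Hl]. split; intros k; [apply H1 | apply H2]; auto. Qed.

Lemma env_cont_const {t} (u : lift (sem Pv t)) : domL (dom Pv t) u -> env_cont (fun _ => u).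
Proof.
  intros Hu. split; [|split]; intros.
  - exact Hu.
  - apply leL_refl.
  - apply lub_const; [apply leL_refl | exact Hu].
Qed.

Lemma env_cont_lookup x t (Hx : D x = Some t) : env_cont (fun h => Val (lookup h Hx)).
Proof.
  split; [|split]; intros.
  - right; right. eexists; split; [reflexivity|]. apply lookup_dom; auto.
  - apply leL_Val. apply lookup_le; auto.
  - apply (lub_lift_Val (le_refl t) (@le_trans t)) with 0 (fun k => lookup (hc k) Hx).
    + split; intros k; [right; right; eexists; split; [reflexivity|]|apply leL_Val];
        [apply lookup_dom | apply lookup_le]; apply H.
    + intros k. rewrite Nat.max_0_r. reflexivity.
    + apply lookup_lub; auto.
Qed.

Lemma env_cont_condL {t} phi (phi1 phi2 : env Pv D -> lift (sem Pv t)) :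
  env_cont phi -> env_cont phi1 -> env_cont phi2 ->
  env_cont (fun h => condL (phi h) (phi1 h) (phi2 h)).
Proof.
  intros H H1 H2. split; [|split].
  - intros h Hh. apply condL_dom; [apply H | apply H1 | apply H2]; auto.
  - intros h h' Hh Hh' Hhh.
    apply condL_mono; [apply H | apply H | apply H | apply H1 | apply H2]; auto.
  - intros hc h Hc Hl. apply condL_cont;
      [apply env_cont_chain | apply H | apply env_cont_chain | apply H1
      | apply env_cont_chain | apply H2]; auto.
Qed.

Lemma env_cont_appL {t1 t2} P (phi1 : env Pv D -> lift (sem Pv (TArr t1 t2))) phi2 :
  env_cont phi1 -> env_cont phi2 -> env_cont (fun h => appL P (phi1 h) (phi2 h)).
Proof.
  intros H1 H2. split; [|split].
  - intros h Hh. apply appL_dom; [apply H1 | apply H2]; auto.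
  - intros h h' Hh Hh' Hhh.
    apply appL_mono; [apply H1 | apply H1 | apply H1 | apply H2 | apply H2 | apply H2]; auto.
  - intros hc h Hc Hl. apply appL_cont;
      [apply env_cont_chain | apply H1 | apply env_cont_chain | apply H2]; auto.
Qed.

End EnvCont.

Section Curry.
Context {D : ctx} (x : var) (t1 t2 : ty).
Variable psi : pset Pv -> env Pv (ext D x t1) -> lift (sem Pv t2).
Hypothesis psi_cont : forall P, env_cont (psi P).

Definition curry (h : env Pv D) : sem Pv (TArr t1 t2) := fun P v => psi P (upd h x t1 v).

Lemma curry_dom h : env_dom h -> dom Pv (TArr t1 t2) (curry h).
Proof.
  intros Hh. apply dom_arr. split; [|split].
  - intros P v Hv. apply psi_cont, upd_dom; auto.
  - intros P v v' Hv Hv' Hvv. apply psi_cont; try apply upd_dom; auto.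
    apply upd_le; auto. apply env_le_refl.
  - intros P c v Hc Hv. apply (psi_cont P).
    + apply env_chain_upd; auto. apply env_chain_const; auto.
    + apply upd_lub; auto. apply env_lub_const; auto.
Qed.

Lemma curry_mono h h' : env_dom h -> env_dom h' -> env_le h h' ->
  le Pv (TArr t1 t2) (curry h) (curry h').
Proof.
  intros Hh Hh' Hhh. apply le_arr. intros P v Hv.
  apply psi_cont; try apply upd_dom; auto. apply upd_le; auto. apply le_refl.
Qed.

Lemma curry_cont hc h : env_chain hc -> env_lub hc h ->
  is_lub (dom Pv (TArr t1 t2)) (le Pv (TArr t1 t2)) (fun k => curry (hc k)) (curry h).
Proof.
  intros Hc Hl. apply lub_arr_of_pointwise.
  - apply curry_dom. apply (env_lub_dom hc); auto.
  - intros P v Hv. apply (psi_cont P).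
    + apply env_chain_upd; auto. split; intros; [exact Hv | apply le_refl].
    + apply upd_lub; auto. apply lub_const; [apply le_refl | exact Hv].
Qed.

Lemma env_cont_curry : env_cont (fun h => Val (curry h)).
Proof.
  split; [|split].
  - intros h Hh. right; right. eexists; split; [reflexivity|]. apply curry_dom; auto.
  - intros h h' Hh Hh' Hhh. apply leL_Val, curry_mono; auto.
  - intros hc h Hc Hl.
    apply (lub_lift_Val (le_refl _) (@le_trans _)) with 0 (fun k => curry (hc k)).
    + split; intros k.
      * right; right. eexists; split; [reflexivity|]. apply curry_dom, Hc.
      * apply leL_Val, curry_mono; apply Hc.
    + intros k. rewrite Nat.max_0_r. reflexivity.
    + apply curry_cont; auto.
Qed.

End Curry.

Section Kleene.
Variables t1 t2 : ty.
Notation T := (TArr t1 t2).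

Definition botf : sem Pv T := fun _ _ => Bot.

Lemma botf_dom : dom Pv T botf.
Proof.
  apply dom_arr. split; [|split]; intros.
  - left; reflexivity.
  - apply leL_refl.
  - apply lub_lift_Bot. reflexivity.
Qed.

Lemma botf_le g : le Pv T botf g.
Proof. apply le_arr. intros; left; reflexivity. Qed.

Definition kleene (G : sem Pv T -> sem Pv T) (k : nat) : sem Pv T := Nat.iter k G botf.

Variable G : sem Pv T -> sem Pv T.
Hypothesis G_dom : forall g, dom Pv T g -> dom Pv T (G g).
Hypothesis G_mono : forall g g', dom Pv T g -> dom Pv T g' -> le Pv T g g' ->
  le Pv T (G g) (G g').
Hypothesis G_cont : forall c g, chain (dom Pv T) (le Pv T) c -> is_lub (dom Pv T) (le Pv T) c g ->
  is_lub (dom Pv T) (le Pv T) (fun k => G (c k)) (G g).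

Lemma kleene_dom k : dom Pv T (kleene G k).
Proof. induction k; [apply botf_dom | apply G_dom; auto]. Qed.

Lemma kleene_chain : chain (dom Pv T) (le Pv T) (kleene G).
Proof.
  split; [apply kleene_dom|]. intros k; induction k; [apply botf_le|].
  change (le Pv T (G (kleene G k)) (G (kleene G (S k)))).
  apply G_mono; auto; apply kleene_dom.
Qed.

(* [lfp] is an arbitrary choice among least fixed points: the Kleene lub is
   one of them, and any two of them are equivalent. *)
Lemma lfp_kleene : is_lub (dom Pv T) (le Pv T) (kleene G) (lfp (dom Pv T) (le Pv T) G botf).
Proof.
  destruct (lub_exists T (kleene G) kleene_chain) as [x Hx].
  assert (HGx : is_lub (dom Pv T) (le Pv T) (fun k => kleene G (S k)) (G x))
    by exact (G_cont _ x kleene_chain Hx).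
  assert (Hxd : dom Pv T x) by apply Hx.
  assert (Hleast : forall y, dom Pv T y -> le Pv T (G y) y -> le Pv T x y).
  { intros y Hy HGy. apply Hx; auto. intros k. induction k; [apply botf_le|].
    apply le_trans with (G y); auto. change (le Pv T (G (kleene G k)) (G y)).
    apply G_mono; auto. apply kleene_dom. }
  assert (Hpre : le Pv T (G x) x) by (apply HGx; auto; intros k; apply Hx).
  assert (Hfix : le Pv T (G x) x /\ le Pv T x (G x)).
  { split; [exact Hpre|]. apply Hleast; [apply G_dom; auto|]. apply G_mono; auto. }
  destruct (epsilon_spec (inhabits botf) (fun g => dom Pv T g /\ le Pv T (G g) g /\
      le Pv T g (G g) /\ forall g', dom Pv T g' -> le Pv T (G g') g' -> le Pv T g' (G g') ->
      le Pv T g g')) as (HLd&HL1&_&HL3).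
  { exists x. split; [exact Hxd|split; [apply Hfix|split; [apply Hfix|]]].
    intros g' Hg' Hpre' _. exact (Hleast g' Hg' Hpre'). }
  apply (lub_equiv (@le_trans T)) with x; auto.
Qed.

End Kleene.

Section Letrec.
Context {D : ctx} (f x : var) (t1 t2 : ty).
Notation T := (TArr t1 t2).
Variable psi : pset Pv -> env Pv (ext (ext D f T) x t1) -> lift (sem Pv t2).
Hypothesis psi_cont : forall P, env_cont (psi P).

Definition unfold_rec (h : env Pv D) (g : sem Pv T) : sem Pv T := curry x t1 t2 psi (upd h f T g).

Definition fix_rec (h : env Pv D) : sem Pv T :=
  lfp (dom Pv T) (le Pv T) (unfold_rec h) (botf t1 t2).

Lemma unfold_rec_dom h g : env_dom h -> dom Pv T g -> dom Pv T (unfold_rec h g).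
Proof. intros Hh Hg. apply curry_dom; auto. apply upd_dom; auto. Qed.

Lemma unfold_rec_mono h h' g g' : env_dom h -> env_dom h' -> env_le h h' ->
  dom Pv T g -> dom Pv T g' -> le Pv T g g' -> le Pv T (unfold_rec h g) (unfold_rec h' g').
Proof. intros. apply curry_mono; auto; apply upd_dom || apply upd_le; auto. Qed.

Lemma unfold_rec_cont hc h gc g : env_chain hc -> env_lub hc h ->
  chain (dom Pv T) (le Pv T) gc -> is_lub (dom Pv T) (le Pv T) gc g ->
  is_lub (dom Pv T) (le Pv T) (fun k => unfold_rec (hc k) (gc k)) (unfold_rec h g).
Proof. intros. apply curry_cont; auto; [apply env_chain_upd | apply upd_lub]; auto. Qed.

Lemma fix_rec_kleene h : env_dom h ->
  is_lub (dom Pv T) (le Pv T) (kleene t1 t2 (unfold_rec h)) (fix_rec h).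
Proof.
  intros Hh. apply lfp_kleene.
  - intros g Hg. apply unfold_rec_dom; auto.
  - intros g g' Hg Hg' Hgg. apply unfold_rec_mono; auto. apply env_le_refl.
  - intros c g Hc Hg. apply (unfold_rec_cont (fun _ => h)); auto.
    + apply env_chain_const; auto.
    + apply env_lub_const; auto.
Qed.

Lemma kleene_rec_chain h : env_dom h -> chain (dom Pv T) (le Pv T) (kleene t1 t2 (unfold_rec h)).
Proof.
  intros Hh. apply kleene_chain.
  - intros g Hg. apply unfold_rec_dom; auto.
  - intros g g' Hg Hg' Hgg. apply unfold_rec_mono; auto. apply env_le_refl.
Qed.

Lemma kleene_rec_dom h k : env_dom h -> dom Pv T (kleene t1 t2 (unfold_rec h) k).
Proof. intros Hh. apply kleene_rec_chain; auto. Qed.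

Lemma kleene_rec_mono h h' k : env_dom h -> env_dom h' -> env_le h h' ->
  le Pv T (kleene t1 t2 (unfold_rec h) k) (kleene t1 t2 (unfold_rec h') k).
Proof.
  intros Hh Hh' Hhh. induction k; [apply botf_le|].
  apply unfold_rec_mono; auto; apply kleene_rec_dom; auto.
Qed.

Lemma kleene_rec_cont hc h k : env_chain hc -> env_lub hc h ->
  is_lub (dom Pv T) (le Pv T) (fun j => kleene t1 t2 (unfold_rec (hc j)) k)
    (kleene t1 t2 (unfold_rec h) k).
Proof.
  intros Hc Hl. induction k.
  - apply lub_const; [apply le_refl | apply botf_dom].
  - apply (unfold_rec_cont hc h (fun j => kleene t1 t2 (unfold_rec (hc j)) k)); auto.
    split; intros j; [apply kleene_rec_dom | apply kleene_rec_mono]; apply Hc.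
Qed.

Lemma fix_rec_dom h : env_dom h -> dom Pv T (fix_rec h).
Proof. intros Hh. apply fix_rec_kleene; auto. Qed.

Lemma fix_rec_mono h h' : env_dom h -> env_dom h' -> env_le h h' ->
  le Pv T (fix_rec h) (fix_rec h').
Proof.
  intros Hh Hh' Hhh. apply (fix_rec_kleene h Hh); [apply fix_rec_dom; auto|]. intros k.
  apply le_trans with (kleene t1 t2 (unfold_rec h') k).
  - apply kleene_rec_mono; auto.
  - apply (fix_rec_kleene h' Hh').
Qed.

(* Both lubs, over the Kleene index and over the chain of environments, commute. *)
Lemma fix_rec_cont hc h : env_chain hc -> env_lub hc h ->
  is_lub (dom Pv T) (le Pv T) (fun j => fix_rec (hc j)) (fix_rec h).
Proof.
  intros Hc Hl. assert (Hh : env_dom h) by exact (env_lub_dom hc h Hl).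
  split; [apply fix_rec_dom; auto|split].
  - intros j. apply fix_rec_mono; auto; [apply Hc | apply env_lub_ub; auto].
  - intros y Hy Hub. apply (fix_rec_kleene h Hh); auto. intros k.
    apply (kleene_rec_cont hc h k Hc Hl); auto. intros j.
    apply le_trans with (fix_rec (hc j)); [|apply Hub].
    apply (fix_rec_kleene (hc j) (proj1 Hc j)).
Qed.

Lemma env_cont_fix_rec {t} (chi : env Pv (ext D f T) -> lift (sem Pv t)) :
  env_cont chi -> env_cont (fun h => chi (upd h f T (fix_rec h))).
Proof.
  intros (H1&H2&H3). split; [|split].
  - intros h Hh. apply H1, upd_dom, fix_rec_dom; auto.
  - intros h h' Hh Hh' Hhh. apply H2; try (apply upd_dom, fix_rec_dom; auto).
    apply upd_le, fix_rec_mono; auto.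
  - intros hc h Hc Hl. apply H3.
    + apply env_chain_upd; auto.
      split; intros k; [apply fix_rec_dom | apply fix_rec_mono]; apply Hc.
    + apply upd_lub, fix_rec_cont; auto.
Qed.

End Letrec.

End Types.

Section Denotation.
Context {Pr Pv : Type} (A : Pr -> pset Pv).

Lemma den_env_cont {D e t} (d : @has_type Pr Pv D e t) n P : env_cont (den A d n P).
Proof.
  revert n P; induction d; intros n0 P.
  - apply env_cont_const. right; right. exists true; split; [reflexivity | exact I].
  - apply env_cont_lookup.
  - exact (env_cont_condL _ _ _ (IHd1 n0 P) (IHd2 n0 P) (IHd3 n0 P)).
  - exact (env_cont_curry x t1 t2 (den A d n0) (IHd n0)).
  - exact (env_cont_appL P _ _ (IHd1 n0 P) (IHd2 n0 P)).
  - exact (env_cont_fix_rec f x t1 t2 (den A d1 n0) (IHd1 n0) (den A d2 n0 P) (IHd2 n0 P)).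
  - apply IHd.
  - apply IHd.
  - cbn [den]. destruct (excluded_middle_informative (P p)); [apply IHd|].
    apply env_cont_const. right; left; reflexivity.
  - cbn [den]. destruct (excluded_middle_informative (P p)); [apply IHd1 | apply IHd2].
Qed.

End Denotation.

Section Safety.
Context {Pr Pv : Type} (A : Pr -> pset Pv).

Fixpoint safe (th : aty Pv) (t : ty) {struct th} : sem Pv t -> Prop :=
  match th with
  | AArr th1 Pi th2 =>
      match t as t0 return sem Pv t0 -> Prop with
      | TArr t1 t2 => fun f => forall P, psubset Pi P ->
          forall v, dom Pv t1 v -> safe th1 t1 v ->
          f P v <> Star /\ forall a, f P v = Val a -> safe th2 t2 a
      | TBool => fun _ => True
      end
  | ABool => fun _ => True
  end.

Definition safeL th t (u : lift (sem Pv t)) : Prop :=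
  u <> Star /\ forall a, u = Val a -> safe th t a.

Lemma safeL_Bot th t : safeL th t Bot.
Proof. split; [discriminate | intros a Ha; discriminate Ha]. Qed.

Lemma safe_sub th' th : subty th' th -> forall t v, safe th' t v -> safe th t v.
Proof.
  induction 1 as [|th1 Pi1 th1' th2 Pi2 th2' _ IH1 _ IH2 HPi];
    intros [|t1 t2] v Hv; try exact I.
  intros P HP w Hw Rw.
  destruct (Hv P (fun q Hq => HP q (HPi q Hq)) w Hw (IH1 t1 w Rw)) as [Hns Hval].
  split; [exact Hns|]. intros a Ha. apply IH2, Hval, Ha.
Qed.

Lemma safe_adm th : forall t c x, chain (dom Pv t) (le Pv t) c ->
  is_lub (dom Pv t) (le Pv t) c x -> (forall k, safe th t (c k)) -> safe th t x.
Proof.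
  induction th as [|th1 _ Pi th2 IH2]; intros [|t1 t2] c x Hc Hx Hk; try exact I.
  intros P HP v Hv Rv.
  destruct (lift_lub_cases (@le_refl Pv t2) (@le_trans Pv t2) (fun k => c k P v) (x P v)
              (chain_arr_app t1 t2 c P v Hc Hv) (lub_arr_pointwise t1 t2 c x Hc Hx P v Hv))
    as [(->&k&Hs)|[(->&_)|(k0&w&a&->&Hw&Ha&Hcw)]].
  - destruct (Hk k P HP v Hv Rv) as [Hns _]. contradiction.
  - apply safeL_Bot.
  - split; [discriminate|]. intros a' Ha'. injection Ha' as <-.
    apply (IH2 t2 w); auto. intros k.
    apply (proj2 (Hk (max k k0) P HP v Hv Rv)). apply Hcw.
Qed.

Lemma safe_fix_rec {D : ctx} f x t1 t2 psi th1 Pi th2 (h : env Pv D) :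
  (forall P, env_cont (psi P)) -> env_dom h ->
  (forall g, dom Pv (TArr t1 t2) g -> safe (AArr th1 Pi th2) (TArr t1 t2) g ->
     safe (AArr th1 Pi th2) (TArr t1 t2) (unfold_rec f x t1 t2 psi h g)) ->
  safe (AArr th1 Pi th2) (TArr t1 t2) (fix_rec f x t1 t2 psi h).
Proof.
  intros Hpsi Hh Hstep.
  apply (safe_adm _ _ _ _ (kleene_rec_chain f x t1 t2 psi Hpsi h Hh)
           (fix_rec_kleene f x t1 t2 psi Hpsi h Hh)).
  intros k. induction k.
  - intros P _ v _ _. apply safeL_Bot.
  - apply Hstep; auto. apply kleene_rec_dom; auto.
Qed.

Definition env_safe {D : ctx} (G : var -> option (aty Pv)) (h : env Pv D) : Prop :=
  forall y th, G y = Some th ->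
    match D y as o return envty Pv o -> Prop with
    | Some t => safe th t | None => fun _ => True end (h y).

Lemma lookup_safe {D : ctx} G (h : env Pv D) x th t (Hx : D x = Some t) :
  env_safe G h -> G x = Some th -> safe th t (lookup h Hx).
Proof.
  intros H Hg. specialize (H x th Hg). unfold lookup. revert H. generalize (h x). rewrite Hx. auto.
Qed.

Lemma upd_safe {D : ctx} G (h : env Pv D) x th t v :
  env_safe G h -> safe th t v -> env_safe (ext G x th) (upd h x t v).
Proof.
  intros H Hv y th' Hy. unfold upd, ext in *. specialize (H y th').
  destruct (Nat.eqb y x); [injection Hy as <-; exact Hv | exact (H Hy)].
Qed.

Lemma psubset_sqcup (n : Pr) (Pi P : pset Pv) p :
  psubset Pi P -> psubset (sqcup A n Pi p) (sqcup A n P p).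
Proof.
  intros H q. unfold sqcup. destruct (excluded_middle_informative (A n p)); [|auto].
  intros [Hq|Hq]; [left; auto | right; exact Hq].
Qed.

Lemma anal_safe {D e t} (d : @has_type Pr Pv D e t) :
  forall G n th Pi, anal A G n e th Pi ->
  forall P (h : env Pv D), psubset Pi P -> env_dom h -> env_safe G h ->
  safeL th t (den A d n P h).
Proof.
  induction d; intros G n0 th Pi HA P h HP Hh HG; cbn [den].
  - split; [discriminate | intros; destruct th; exact I].
  - inversion HA as [|? ? ? ? Hx| | | | | | | |]; subst.
    split; [discriminate|]. intros a Ha. injection Ha as <-. eapply lookup_safe; eauto.
  - inversion HA as [| | | |? ? ? ? ? ? Pi1 Pi2 Pi3 Hc H1 H2| | | | |]; subst.
    destruct (IHd1 _ _ _ _ Hc P h (fun q Hq => HP q (or_introl Hq)) Hh HG) as [Hns _].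
    destruct (den A d1 n0 P h) as [| |[|]]; simpl.
    + apply safeL_Bot.
    + contradiction.
    + apply (IHd2 _ _ _ _ H1); auto. intros q Hq. apply HP. right; left; exact Hq.
    + apply (IHd3 _ _ _ _ H2); auto. intros q Hq. apply HP. right; right; exact Hq.
  - inversion HA as [| |? ? ? ? th1 th2 Pi0 Hb| | | | | | |]; subst.
    split; [discriminate|]. intros a Ha. injection Ha as <-. intros P' HP' v Hv Rv.
    exact (IHd _ _ _ _ Hb P' (upd h x t1 v) HP' (upd_dom x t1 h v Hh Hv)
             (upd_safe G h x th1 t1 v HG Rv)).
  - inversion HA as [| | |? ? ? ? th1 th1' ? Pi0 Pi1 Pi2 H1 H2 Hsub| | | | | |]; subst.
    destruct (IHd1 _ _ _ _ H1 P h (fun q Hq => HP q (or_intror (or_introl Hq))) Hh HG)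
      as [Ns1 V1].
    destruct (IHd2 _ _ _ _ H2 P h (fun q Hq => HP q (or_intror (or_intror Hq))) Hh HG)
      as [Ns2 V2].
    pose proof (proj1 (den_env_cont A d2 n0 P) h Hh) as D2.
    destruct (den A d1 n0 P h) as [| |F]; simpl; [apply safeL_Bot | contradiction|].
    destruct (den A d2 n0 P h) as [| |v]; simpl; [apply safeL_Bot | contradiction|].
    exact (V1 F eq_refl P (fun q Hq => HP q (or_introl Hq)) v (domL_Val_inv v D2)
             (safe_sub _ _ Hsub t1 v (V2 v eq_refl))).
  - inversion HA as [| | | | |? ? ? ? ? ? th1 th2 ? Pi0 Pi1 H1 H2| | | |]; subst.
    set (L := fix_rec f x t1 t2 (den A d1 n0) h).
    assert (HL : safe (AArr th1 Pi0 th2) (TArr t1 t2) L).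
    { apply safe_fix_rec; auto; [apply den_env_cont|].
      intros g Hg Rg P' HP' v Hv Rv.
      exact (IHd1 _ _ _ _ H1 P' _ HP' (upd_dom x t1 _ v (upd_dom f _ h g Hh Hg) Hv)
               (upd_safe _ _ x th1 t1 v (upd_safe G h f _ _ g HG Rg) Rv)). }
    apply (IHd2 _ _ _ _ H2 P (upd h f (TArr t1 t2) L)).
    + intros q Hq. apply HP. right; exact Hq.
    + apply upd_dom; auto. apply fix_rec_dom; auto. apply den_env_cont.
    + apply upd_safe; auto.
  - inversion HA as [| | | | | | | |? ? ? ? ? ? H Hsub|]; subst.
    apply (IHd G n th Pi); auto. intros q Hq; split; auto.
  - inversion HA as [| | | | | | |? ? ? ? ? ? H| |]; subst.
    apply (IHd G n0 th (sqcup A n0 Pi p)); auto. apply psubset_sqcup; auto.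
  - inversion HA as [| | | | | |? ? ? ? ? Pi0 H| | |]; subst.
    destruct (excluded_middle_informative (P p)) as [Hp|Hp].
    + apply (IHd G n0 th Pi0); auto. intros q Hq; apply HP; left; exact Hq.
    + exfalso. apply Hp, HP. right; reflexivity.
  - inversion HA as [| | | | | | | | |? ? ? ? ? ? Pi1 Pi2 H1 H2]; subst.
    destruct (excluded_middle_informative (P p)).
    + apply (IHd1 G n0 th Pi1); auto. intros q Hq; apply HP; left; exact Hq.
    + apply (IHd2 G n0 th Pi2); auto. intros q Hq; apply HP; right; exact Hq.
Qed.

End Safety.

Theorem theorem1 (Pr Pv : Type) (A : Pr -> pset Pv) (e : expr Pr Pv) (n : Pr)
  (th : aty Pv) (Pi : pset Pv) :
  anal A emptyc n e th Pi ->
  forall P : pset Pv, psubset Pi P ->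
  forall d : has_type emptyc e (erase th),
    den A d n P (empty_env Pv) <> Star.
Proof.
  intros HA P HP d.
  apply (anal_safe A d emptyc n th Pi HA P (empty_env Pv) HP).
  - intros y. exact I.
  - intros y th' Hy. discriminate Hy.
Qed.
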